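(* Let $f(x)=x^TAx+a^Tx+\alpha$ with $A$ real symmetric, and $g_i(x)=x^TB_ix+b_i^Tx+\beta_i$, $i=1,\dots,m$, with each $B_i$ real symmetric positive semidefinite. Consider $(QP)$: $\inf\{f(x): g_i(x)\le0,\ i=1,\dots,m\}$. Suppose there exist $i_0$ and $\lambda\in\mathbb{R}$ with $B_{i_0}\succ0$ such that (H1) and (H2) hold, and there exists $x^0$ with $g_i(x^0)<0$ for all $i$. Let $\bar x$ be feasible for $(QP)$. Then $\bar x$ is a global minimizer of $(QP)$ if and only if there exists $\lambda=(\lambda_1,\dots,\lambda_m)\in\mathbb{R}^m_+$ such that (i) $2\big(A+\sum_{i=1}^m\lambda_iB_i\big)\bar x+\big(a+\sum_{i=1}^m\lambda_ib_i\big)=0$; (ii) $\lambda_ig_i(\bar x)=0$ for $i=1,\dots,m$; (iii) $A+\sum_{i=1}^m\lambda_iB_i\succeq 0$.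
   Context: (H1): $A+\lambda B_{i_0}\succeq 0$. (H2): there is a nonzero $v\in\mathbb{R}^n$ with $(A+\lambda B_{i_0})v=0$, $(a+\lambda b_{i_0})^Tv\le0$, $B_iv=0$ and $b_i^Tv\le0$ for all $i\ne i_0$. (The $\lambda$ in (H1),(H2) is a real scalar unrelated to the multiplier vector in the conclusion.) *)

From mathcomp Require Import all_boot all_order all_algebra.
From mathcomp Require Import reals.
Set Implicit Arguments. Unset Strict Implicit. Unset Printing Implicit Defensive.
Import Order.TTheory GRing.Theory Num.Theory.
Local Open Scope ring_scope.

Definition sc (R : ringType) (M : 'M[R]_1) : R := M 0 0.

Definition quadf (R : ringType) (n : nat) (Q : 'M[R]_n) (q : 'cV[R]_n) (c : R)
  (x : 'cV[R]_n) : R :=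
  sc (x^T *m Q *m x) + sc (q^T *m x) + c.

Definition symmx (R : ringType) (n : nat) (M : 'M[R]_n) : Prop := M^T = M.

(* positive semidefinite (symmetric assumed separately) *)
Definition psd (R : numDomainType) (n : nat) (M : 'M[R]_n) : Prop :=
  forall v : 'cV[R]_n, 0 <= sc (v^T *m M *m v).

Definition pd (R : numDomainType) (n : nat) (M : 'M[R]_n) : Prop :=
  forall v : 'cV[R]_n, v != 0 -> 0 < sc (v^T *m M *m v).

(* Sufficiency: the Lagrangian f + sum_i mu_i g_i is a convex quadratic with a
   critical point at xbar; it equals f at xbar and lies below f on the feasible
   set.
   Necessity: with k = max(lam, 0), the penalized objective f + k g_i0 is convex
   by (H1) and B_i0 >= 0. When lam > 0, moving a feasible point along the
   direction v of (H2) until g_i0 vanishes keeps it feasible and does not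
   increase f + lam g_i0, so xbar also minimizes f + k g_i0 and k g_i0(xbar) = 0.
   Slater's condition and Farkas' lemma give KKT multipliers for this convex
   problem, and adding k to the
   multiplier of i0 yields multipliers for f whose Lagrangian is psd. *)

From mathcomp Require Import all_boot all_order all_algebra.
From mathcomp Require Import reals.
From mathcomp Require Import ring lra.
From Stdlib Require Import Classical.
Import Order.TTheory GRing.Theory Num.Theory.
Local Open Scope ring_scope.
Set Implicit Arguments. Unset Strict Implicit.

Section Dot.
Variables (F : realFieldType) (n : nat).
Implicit Types u v w : 'cV[F]_n.

Definition dot u v : F := sc (u^T *m v).

Lemma dotDl u w v : dot (u + w) v = dot u v + dot w v.
Proof. by rewrite /dot /sc linearD /= mulmxDl mxE. Qed.
Lemma dotDr u w v : dot v (u + w) = dot v u + dot v w.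
Proof. by rewrite /dot /sc mulmxDr mxE. Qed.
Lemma dotZl k u v : dot (k *: u) v = k * dot u v.
Proof. by rewrite /dot /sc linearZ /= -scalemxAl mxE. Qed.
Lemma dotZr k u v : dot v (k *: u) = k * dot v u.
Proof. by rewrite /dot /sc -scalemxAr mxE. Qed.
Lemma dot0l v : dot 0 v = 0.
Proof. by rewrite /dot /sc linear0 mul0mx mxE. Qed.
Lemma dot0r v : dot v 0 = 0.
Proof. by rewrite /dot /sc mulmx0 mxE. Qed.
Lemma dotNl u v : dot (- u) v = - dot u v.
Proof. by rewrite -scaleN1r dotZl mulN1r. Qed.
Lemma dotNr u v : dot v (- u) = - dot v u.
Proof. by rewrite -scaleN1r dotZr mulN1r. Qed.
Lemma dotBl u w v : dot (u - w) v = dot u v - dot w v.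
Proof. by rewrite dotDl dotNl. Qed.
Lemma dotBr u w v : dot v (u - w) = dot v u - dot v w.
Proof. by rewrite dotDr dotNr. Qed.

Lemma dotC u v : dot u v = dot v u.
Proof.
by rewrite /dot /sc -[in RHS](trmxK u) -trmx_mul [in RHS]mxE.
Qed.

Lemma dot_mulmx u (Q : 'M[F]_n) v : dot u (Q *m v) = dot (Q^T *m u) v.
Proof. by rewrite /dot trmx_mul trmxK mulmxA. Qed.

Lemma dot_suml I (r : seq I) (P : pred I) (G : I -> 'cV[F]_n) v :
  dot (\sum_(i <- r | P i) G i) v = \sum_(i <- r | P i) dot (G i) v.
Proof. exact: (big_morph (dot^~ v) (fun x y => dotDl x y v) (dot0l v)). Qed.
Lemma dot_sumr I (r : seq I) (P : pred I) (G : I -> 'cV[F]_n) v :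
  dot v (\sum_(i <- r | P i) G i) = \sum_(i <- r | P i) dot v (G i).
Proof. exact: (big_morph (dot v) (fun x y => dotDr x y v) (dot0r v)). Qed.

Lemma dot_self_le0 v : dot v v <= 0 -> v = 0.
Proof.
have sq_ge0 k : 0 <= (v^T 0 k * v k 0) by rewrite mxE; exact: sqr_ge0.
rewrite /dot /sc mxE => v2_le0.
have /eqP : \sum_k v^T 0 k * v k 0 = 0.
  by apply/eqP; rewrite eq_le v2_le0 sumr_ge0.
rewrite psumr_eq0 // => /allP v2_eq0; apply/matrixP=> i j.
have := v2_eq0 i (mem_index_enum i).
by rewrite (ord1 j) !mxE mulf_eq0 orbb => /eqP.
Qed.
End Dot.

Section Quadratic.
Variables (F : realFieldType) (n : nat).
Implicit Types (Q : 'M[F]_n) (q x y d : 'cV[F]_n).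

Definition grad Q q x := 2%:R *: (Q *m x) + q.

Lemma quadfE Q q c x : quadf Q q c x = dot x (Q *m x) + dot q x + c.
Proof. by rewrite /quadf /dot mulmxA. Qed.

Lemma psdE Q : psd Q <-> forall v, 0 <= dot v (Q *m v).
Proof. by split=> Qpsd v; have := Qpsd v; rewrite /dot mulmxA. Qed.

Lemma psdD Q1 Q2 : psd Q1 -> psd Q2 -> psd (Q1 + Q2).
Proof.
move=> /psdE Q1psd /psdE Q2psd; apply/psdE => v.
by rewrite mulmxDl dotDr addr_ge0.
Qed.

Lemma psdZ k Q : 0 <= k -> psd Q -> psd (k *: Q).
Proof.
move=> k_ge0 /psdE Qpsd; apply/psdE => v.
by rewrite -scalemxAl dotZr mulr_ge0.
Qed.

Lemma symmxD Q1 Q2 : symmx Q1 -> symmx Q2 -> symmx (Q1 + Q2).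
Proof. by rewrite /symmx linearD /= => -> ->. Qed.

Lemma symmxZ k Q : symmx Q -> symmx (k *: Q).
Proof. by rewrite /symmx linearZ /= => ->. Qed.

Lemma symmx_lagrangian m Q (B : 'I_m -> 'M[F]_n) (mu : 'I_m -> F) :
  symmx Q -> (forall i, symmx (B i)) -> symmx (Q + \sum_i mu i *: B i).
Proof.
move=> Qsym Bsym; apply: symmxD => //.
elim/big_ind: _ => [||i _]; [exact: trmx0|exact: symmxD|exact: symmxZ].
Qed.

Lemma psd_lagrangian m Q (B : 'I_m -> 'M[F]_n) (mu : 'I_m -> F) :
  psd Q -> (forall i, psd (B i)) -> (forall i, 0 <= mu i) ->
  psd (Q + \sum_i mu i *: B i).
Proof.
move=> Qpsd Bpsd mu_ge0; apply: psdD => //.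
elim/big_ind: _ => [v||i _]; last exact: psdZ.
  by rewrite mulmx0 mul0mx /sc mxE.
exact: psdD.
Qed.

Lemma quadf_shift Q q c x d t : symmx Q ->
  quadf Q q c (x + t *: d) =
  quadf Q q c x + t * dot (grad Q q x) d + t ^+ 2 * dot d (Q *m d).
Proof.
move=> Qsym.
have Qxd : dot x (Q *m d) = dot (Q *m x) d by rewrite dot_mulmx Qsym.
have Qdx : dot d (Q *m x) = dot (Q *m x) d by rewrite dotC.
rewrite !quadfE /grad mulmxDr -scalemxAr !dotDl !dotDr !dotZl !dotZr Qxd Qdx.
ring.
Qed.

Lemma quadf_shift_ker Q q c x d t : symmx Q -> Q *m d = 0 ->
  quadf Q q c (x + t *: d) = quadf Q q c x + t * dot q d.
Proof.
move=> Qsym Qd0; rewrite quadf_shift // Qd0 dot0r mulr0 addr0 /grad dotDl dotZl.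
by rewrite dotC dot_mulmx Qsym Qd0 dot0l mulr0 add0r.
Qed.

Lemma quadf_tangent_le Q q c x y : symmx Q -> psd Q ->
  quadf Q q c x + dot (grad Q q x) (y - x) <= quadf Q q c y.
Proof.
move=> Qsym /psdE Qpsd.
rewrite [in X in _ <= X](_ : y = x + 1 *: (y - x)); last first.
  by rewrite scale1r addrC subrK.
rewrite quadf_shift // mul1r expr1n mul1r lerDl; exact: Qpsd.
Qed.

Lemma quadfD Q1 Q2 q1 q2 c1 c2 x :
  quadf (Q1 + Q2) (q1 + q2) (c1 + c2) x = quadf Q1 q1 c1 x + quadf Q2 q2 c2 x.
Proof. by rewrite !quadfE mulmxDl dotDr dotDl; ring. Qed.

Lemma quadfZ k Q q c x : quadf (k *: Q) (k *: q) (k * c) x = k * quadf Q q c x.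
Proof. by rewrite !quadfE -scalemxAl dotZr dotZl; ring. Qed.

Lemma quadf_sum m (B : 'I_m -> 'M[F]_n) b beta (mu : 'I_m -> F) x :
  quadf (\sum_i mu i *: B i) (\sum_i mu i *: b i) (\sum_i mu i * beta i) x =
  \sum_i mu i * quadf (B i) (b i) (beta i) x.
Proof.
rewrite quadfE mulmx_suml dot_sumr dot_suml -!big_split; apply: eq_bigr => i _.
by rewrite -scalemxAl dotZr dotZl quadfE /=; ring.
Qed.

Lemma grad_lagrangian m Q q (B : 'I_m -> 'M[F]_n) b (mu : 'I_m -> F) x :
  grad (Q + \sum_i mu i *: B i) (q + \sum_i mu i *: b i) x =
  grad Q q x + \sum_i mu i *: grad (B i) (b i) x.
Proof.
rewrite /grad mulmxDl mulmx_suml scalerDr addrACA; congr (_ + _).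
rewrite scaler_sumr -big_split; apply: eq_bigr => i _.
by rewrite scalerDr -scalemxAl !scalerA mulrC.
Qed.

Lemma lagrangian_shift (V : lmodType F) m (x : V) (G : 'I_m -> V) mu i0 k :
  x + \sum_i (mu i + (if i == i0 then k else 0)) *: G i =
  (x + k *: G i0) + \sum_i mu i *: G i.
Proof.
have shift : \sum_i (if i == i0 then k else 0) *: G i = k *: G i0.
  rewrite (bigD1 i0) //= eqxx big1 ?addr0 // => i /negbTE ->.
  exact: scale0r.
under eq_bigr do rewrite scalerDl.
by rewrite big_split /= shift addrA addrAC.
Qed.

Lemma kkt_sufficient m A a alpha (B : 'I_m -> 'M[F]_n) b beta mu xbar :
  symmx A -> (forall i, symmx (B i)) -> (forall i, 0 <= mu i) ->
  grad (A + \sum_i mu i *: B i) (a + \sum_i mu i *: b i) xbar = 0 ->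
  (forall i, mu i * quadf (B i) (b i) (beta i) xbar = 0) ->
  psd (A + \sum_i mu i *: B i) ->
  forall x, (forall i, quadf (B i) (b i) (beta i) x <= 0) ->
  quadf A a alpha xbar <= quadf A a alpha x.
Proof.
move=> Asym Bsym mu_ge0 grad0 compl Lpsd x x_feas.
have L_eq y : quadf (A + \sum_i mu i *: B i) (a + \sum_i mu i *: b i)
    (alpha + \sum_i mu i * beta i) y =
    quadf A a alpha y + \sum_i mu i * quadf (B i) (b i) (beta i) y.
  by rewrite quadfD quadf_sum.
have := quadf_tangent_le (a + \sum_i mu i *: b i) (alpha + \sum_i mu i * beta i)
  xbar x (symmx_lagrangian mu Asym Bsym) Lpsd.
rewrite grad0 dot0l addr0 !L_eq big1 ?addr0 // => /le_trans; apply.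
by rewrite gerDl sumr_le0 // => i _; apply: mulr_ge0_le0.
Qed.
End Quadratic.

Section Farkas.
Variables (F : realFieldType) (n : nat).
Implicit Types (r d : 'cV[F]_n).

Lemma cone_project m (a : 'I_m -> 'cV[F]_n) (a0 : 'cV[F]_n) r d :
  0 < dot a0 d ->
  (forall d', dot a0 d' <= 0 -> (forall j, dot (a j) d' <= 0) -> dot r d' <= 0) ->
  let pr u := u - (dot u d / dot a0 d) *: a0 in
  forall d', (forall j, dot (pr (a j)) d' <= 0) -> dot (pr r) d' <= 0.
Proof.
move=> a0d_gt0 Hcone pr d' Hd'.
(* [pr] is adjoint to the projection of [d'] onto the hyperplane [a0^perp] along [d]. *)
pose e := d' - (dot a0 d' / dot a0 d) *: d.
have pr_adj u : dot (pr u) d' = dot u e.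
  by rewrite /pr /e dotBl dotZl dotBr dotZr; ring.
rewrite pr_adj; apply: Hcone => [|j]; last by rewrite -pr_adj.
by rewrite /e dotBr dotZr divfK ?subrr // gt_eqF.
Qed.

Lemma farkas m (a : 'I_m -> 'cV[F]_n) r :
  (forall d, (forall i, dot (a i) d <= 0) -> dot r d <= 0) ->
  exists2 mu : 'I_m -> F, forall i, 0 <= mu i & r = \sum_i mu i *: a i.
Proof.
elim: m a r => [|m IH] a r Hcone.
  by exists (fun=> 0) => //; rewrite big_ord0; apply: dot_self_le0; apply: Hcone => -[].
have Hcone0 d : dot (a ord0) d <= 0 ->
    (forall j, dot (a (lift ord0 j)) d <= 0) -> dot r d <= 0.
  by move=> a0d ajd; apply: Hcone => i; case: (unliftP ord0 i) => [j ->|->].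
pose ext (mu : 'I_m -> F) c i := oapp mu c (unlift ord0 i).
have sum_ext mu c : \sum_i ext mu c i *: a i =
    c *: a ord0 + \sum_j mu j *: a (lift ord0 j).
  by rewrite big_ord_recl /ext unlift_none; under eq_bigr do rewrite liftK.
have ext_ge0 mu c : (forall j, 0 <= mu j) -> 0 <= c -> forall i, 0 <= ext mu c i.
  by move=> mu_ge0 c_ge0 i; rewrite /ext; case: (unliftP ord0 i) => [j|] _ /=.
have [Hcone'|] := classic
  (forall d, (forall j, dot (a (lift ord0 j)) d <= 0) -> dot r d <= 0).
  have [mu mu_ge0 ->] := IH _ _ Hcone'.
  exists (ext mu 0); first exact: ext_ge0.
  by rewrite sum_ext scale0r add0r.
move=> /(not_all_ex_not _ _) [d Hd]; have [ajd rd] := imply_to_and _ _ Hd.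
have rd_gt0 : 0 < dot r d by rewrite ltNge; apply/negP.
have a0d_gt0 : 0 < dot (a ord0) d.
  by rewrite ltNge; apply/negP => a0d; move: rd_gt0; rewrite ltNge Hcone0.
have [lam lam_ge0 pr_r] := IH _ _ (cone_project a0d_gt0 Hcone0).
pose s := dot (a ord0) d.
pose c := (dot r d - \sum_j lam j * dot (a (lift ord0 j)) d) / s.
exists (ext lam c).
  apply: ext_ge0 => //; apply: divr_ge0; last exact: ltW.
  rewrite subr_ge0 (le_trans _ (ltW rd_gt0)) // sumr_le0 // => j _.
  exact: mulr_ge0_le0.
rewrite sum_ext -[LHS](subrK ((dot r d / s) *: a ord0)) pr_r.
under eq_bigr do rewrite scalerBr scalerA.
rewrite sumrB -scaler_suml -addrA -scaleNr -scalerDl addrC; congr (_ *: _ + _).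
rewrite /c mulrBl mulr_suml addrC; congr (_ - _).
by apply: eq_bigr => j _; rewrite mulrA.
Qed.
End Farkas.

Section SmallSteps.
Variable F : realFieldType.

Lemma quad_small_neg (al be ga : F) : al < 0 \/ (al = 0 /\ be < 0) ->
  exists2 T, 0 < T & forall t, 0 < t -> t <= T -> al + t * be + t ^+ 2 * ga < 0.
Proof.
have be_le := ler_norm be; have ga_le := ler_norm ga.
have be_ge0 := normr_ge0 be; have ga_ge0 := normr_ge0 ga.
case=> [al_lt0|[-> be_lt0]].
  have K_gt0 : 0 < `|be| + `|ga| + 1 by lra.
  exists (Num.min 1 (- al / (`|be| + `|ga| + 1))).
    by rewrite lt_min ltr01 divr_gt0 //; lra.
  move=> t t_gt0; rewrite le_min => /andP[t_le1]; rewrite ler_pdivlMr // => tK.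
  have : t * be <= t * `|be| by rewrite ler_wpM2l // ltW.
  have : t ^+ 2 * ga <= t ^+ 2 * `|ga| by rewrite ler_wpM2l ?sqr_ge0.
  have : t ^+ 2 * `|ga| <= t * `|ga|.
    by rewrite ler_wpM2r // expr2 ler_piMr // ltW.
  nra.
have K_gt0 : 0 < `|ga| + 1 by lra.
exists (- be / (`|ga| + 1)); first by rewrite divr_gt0 //; lra.
move=> t t_gt0; rewrite ler_pdivlMr // => tK.
have : t * ga <= t * `|ga| by rewrite ler_wpM2l // ltW.
have -> : 0 + t * be + t ^+ 2 * ga = t * (be + t * ga) by ring.
by move=> tga; rewrite pmulr_rlt0 //; nra.
Qed.

Lemma quad_small_neg_seq (I : eqType) (s : seq I) (al be ga : I -> F) :
  (forall k, k \in s -> al k < 0 \/ (al k = 0 /\ be k < 0)) ->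
  exists2 T, 0 < T & forall t, 0 < t -> t <= T ->
    forall k, k \in s -> al k + t * be k + t ^+ 2 * ga k < 0.
Proof.
elim: s => [|k s IH] Hs; first by exists 1.
have [T1 T1_gt0 negT1] := quad_small_neg (ga k) (Hs k (mem_head _ _)).
have [T2 T2_gt0 negT2] := IH (fun j js => Hs j (mem_behead (s:=k :: s) js)).
exists (Num.min T1 T2); first by rewrite lt_min T1_gt0 T2_gt0.
move=> t t_gt0; rewrite le_min => /andP[tT1 tT2] j; rewrite inE.
by case/orP=> [/eqP ->|]; [exact: negT1|exact: negT2].
Qed.
End SmallSteps.

Section KKT.
Variables (F : realFieldType) (n m : nat).
Variables (Q : 'M[F]_n) (q : 'cV[F]_n) (c : F).
Variables (B : 'I_m -> 'M[F]_n) (b : 'I_m -> 'cV[F]_n) (beta : 'I_m -> F).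
Hypotheses (Qsym : symmx Q) (Bsym : forall i, symmx (B i)).
Variable xbar : 'cV[F]_n.
Local Notation g i := (quadf (B i) (b i) (beta i)).
Hypothesis xbar_feas : forall i, g i xbar <= 0.
Hypothesis xbar_min :
  forall x, (forall i, g i x <= 0) -> quadf Q q c xbar <= quadf Q q c x.

Lemma no_descent_direction d : dot (grad Q q xbar) d < 0 ->
  ~ (forall i, g i xbar = 0 -> dot (grad (B i) (b i) xbar) d < 0).
Proof.
move=> Qd_lt0 Bd_lt0.
pose al k := if k is Some i then g i xbar else 0.
pose be k := if k is Some i then dot (grad (B i) (b i) xbar) d
             else dot (grad Q q xbar) d.
pose ga k := if k is Some i then dot d (B i *m d) else dot d (Q *m d).
have [|T T_gt0 negT] :=
  quad_small_neg_seq (s := enum {: option 'I_m}) (al := al) (be := be) ga.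
  move=> [i|] _ /=; last by right.
  have := xbar_feas i; rewrite le_eqVlt => /orP[/eqP gi0|]; last by left.
  by right; split; last exact: Bd_lt0.
have negT' k := negT T T_gt0 (lexx T) k (mem_enum _ k).
have feas i : g i (xbar + T *: d) <= 0.
  by rewrite quadf_shift // ltW // (negT' (Some i)).
have := xbar_min feas; rewrite quadf_shift // leNgt => /negP; apply.
by have := negT' None => /=; lra.
Qed.

Hypothesis Bpsd : forall i, psd (B i).
Variable x0 : 'cV[F]_n.
Hypothesis slater : forall i, g i x0 < 0.

Lemma slater_direction i : g i xbar = 0 ->
  dot (grad (B i) (b i) xbar) (x0 - xbar) < 0.
Proof.
move=> gi0; have := quadf_tangent_le (b i) (beta i) xbar x0 (Bsym i) (Bpsd i).
by rewrite gi0 add0r => /le_lt_trans; apply.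
Qed.

Lemma linearized_cone d :
  (forall i, g i xbar = 0 -> dot (grad (B i) (b i) xbar) d <= 0) ->
  0 <= dot (grad Q q xbar) d.
Proof.
move=> Bd_le0; rewrite leNgt; apply/negP => Qd_lt0.
(* Tilting [d] slightly towards the Slater point makes every active constraint strict. *)
pose p := grad Q q xbar; pose e := x0 - xbar.
pose eps := - dot p d / (`|dot p e| + 1).
have K_gt0 : 0 < `|dot p e| + 1 by rewrite ltr_pwDr ?normr_ge0.
have eps_gt0 : 0 < eps by rewrite divr_gt0 // oppr_gt0.
have epsK : eps * (`|dot p e| + 1) = - dot p d by rewrite divfK // gt_eqF.
apply: (no_descent_direction (d := d + eps *: e)) => [|i gi0].
  rewrite dotDr dotZr; have : eps * dot p e <= eps * `|dot p e|.
    by rewrite ler_wpM2l ?ler_norm // ltW.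
  by move: epsK; rewrite mulrDr mulr1; lra.
rewrite dotDr dotZr; have := Bd_le0 i gi0.
by have := slater_direction gi0; rewrite -/e -(pmulr_rlt0 _ eps_gt0); lra.
Qed.

Lemma kkt_necessary : exists2 mu : 'I_m -> F, forall i, 0 <= mu i &
  grad (Q + \sum_i mu i *: B i) (q + \sum_i mu i *: b i) xbar = 0 /\
  forall i, mu i * g i xbar = 0.
Proof.
pose active i := g i xbar == 0.
pose G i := if active i then grad (B i) (b i) xbar else 0.
have [|mu mu_ge0 Qgrad] := @farkas _ _ _ G (- grad Q q xbar).
  move=> d Gd; rewrite dotNl oppr_le0; apply: linearized_cone => i gi0.
  by have := Gd i; rewrite /G /active gi0 eqxx.
exists (fun i => if active i then mu i else 0) => [i|].
  by case: (active i).
split=> [|i]; last by rewrite /active; case: eqP => [->|]; rewrite ?mulr0 ?mul0r.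
rewrite grad_lagrangian -[grad Q q xbar]opprK Qgrad addrC; apply/eqP.
rewrite subr_eq0; apply/eqP.
by apply: eq_bigr => i _; rewrite /G; case: (active i); rewrite ?scale0r ?scaler0.
Qed.
End KKT.

Lemma quadratic_root_nonneg (F : rcfType) (c be ga : F) : c <= 0 -> 0 < ga ->
  exists2 t, 0 <= t & c + t * be + t ^+ 2 * ga = 0.
Proof.
move=> c_le0 ga_gt0.
pose D := be ^+ 2 - 4%:R * ga * c.
have gac_le0 : ga * c <= 0 by rewrite pmulr_rle0.
have beD : be ^+ 2 <= D by rewrite /D; nra.
have D_ge0 : 0 <= D := le_trans (sqr_ge0 be) beD.
pose s := Num.sqrt D.
have s2 : s ^+ 2 = D := sqr_sqrtr D_ge0.
have be_le : be <= s.
  by rewrite (le_trans (ler_norm be)) // -sqrtr_sqr ler_sqrt.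
pose t := (s - be) / (2%:R * ga).
have t2ga : t * (2%:R * ga) = s - be by rewrite divfK // mulf_neq0 // gt_eqF.
exists t; first by rewrite divr_ge0 ?subr_ge0 // mulr_ge0 // ltW.
have : 4%:R * ga * (c + t * be + t ^+ 2 * ga) = s ^+ 2 - D.
  transitivity (4%:R * ga * c + 2%:R * be * (t * (2%:R * ga)) + (t * (2%:R * ga)) ^+ 2).
    by ring.
  by rewrite t2ga /D; ring.
by rewrite s2 subrr => /eqP; rewrite !mulf_eq0 pnatr_eq0 (gt_eqF ga_gt0) => /eqP.
Qed.

Section ConvexReformulation.
Variables (F : rcfType) (n m : nat).
Variables (A : 'M[F]_n) (a : 'cV[F]_n) (alpha : F).
Variables (B : 'I_m -> 'M[F]_n) (b : 'I_m -> 'cV[F]_n) (beta : 'I_m -> F).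
Variables (i0 : 'I_m) (lam : F) (v : 'cV[F]_n).
Hypotheses (Asym : symmx A) (Bsym : forall i, symmx (B i)).
Hypotheses (Bpsd : forall i, psd (B i)) (B0pd : pd (B i0)).
Hypothesis H1 : psd (A + lam *: B i0).
Hypotheses (v_neq0 : v != 0) (v_ker : (A + lam *: B i0) *m v = 0).
Hypothesis v_descent : dot (a + lam *: b i0) v <= 0.
Hypothesis v_other : forall i, i != i0 -> B i *m v = 0 /\ dot (b i) v <= 0.
Local Notation g i := (quadf (B i) (b i) (beta i)).
Local Notation f := (quadf A a alpha).
Local Notation fk k := (quadf (A + k *: B i0) (a + k *: b i0) (alpha + k * beta i0)).

Lemma quadf_penalizedE k x : fk k x = f x + k * g i0 x.
Proof. by rewrite quadfD quadfZ. Qed.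

(* Along [v] the [g i] with [i != i0] and [fk lam] are affine and nonincreasing,
   while [g i0] is strictly convex: stop where [g i0] vanishes. *)
Lemma push_to_boundary x : (forall i, g i x <= 0) ->
  exists2 y, forall i, g i y <= 0 & f y <= fk lam x.
Proof.
move=> x_feas.
have vBv_gt0 : 0 < dot v (B i0 *m v) by have := B0pd v_neq0; rewrite /dot mulmxA.
have [t t_ge0 g0y] := quadratic_root_nonneg (dot (grad (B i0) (b i0) x) v)
  (x_feas i0) vBv_gt0.
have {}g0y : g i0 (x + t *: v) = 0 by rewrite quadf_shift.
have Hsym : symmx (A + lam *: B i0) by exact/symmxD/symmxZ.
exists (x + t *: v) => [i|].
  have [->|/v_other [Biv biv]] := eqVneq i i0; first by rewrite g0y.
  rewrite quadf_shift_ker //; have := x_feas i.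
  by have := mulr_ge0_le0 t_ge0 biv; lra.
rewrite -[f _]addr0 -(mulr0 lam) -g0y -quadf_penalizedE quadf_shift_ker //.
by have := mulr_ge0_le0 t_ge0 v_descent; lra.
Qed.

Variable xbar : 'cV[F]_n.
Hypothesis xbar_feas : forall i, g i xbar <= 0.
Hypothesis xbar_min : forall x, (forall i, g i x <= 0) -> f xbar <= f x.

Lemma convex_reformulation : exists k, [/\ 0 <= k, psd (A + k *: B i0),
  k * g i0 xbar = 0 & forall x, (forall i, g i x <= 0) -> fk k xbar <= fk k x].
Proof.
have [lam_gt0|lam_le0] := ltrP 0 lam.
  have kg0_le0 := mulr_ge0_le0 (ltW lam_gt0) (xbar_feas i0).
  exists lam; split=> [|//||x x_feas]; first exact: ltW.
    have [y y_feas fy] := push_to_boundary xbar_feas.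
    by have := xbar_min y_feas; rewrite quadf_penalizedE in fy; lra.
  have [y y_feas fy] := push_to_boundary x_feas.
  by have := xbar_min y_feas; rewrite quadf_penalizedE; lra.
exists 0; split=> [//| | |x x_feas].
- rewrite scale0r addr0 -[A](addrK (lam *: B i0)) -scaleNr.
  by apply: psdD => //; apply: psdZ; rewrite ?oppr_ge0.
- by rewrite mul0r.
- by rewrite !quadf_penalizedE !mul0r !addr0; apply: xbar_min.
Qed.
End ConvexReformulation.

Unset Implicit Arguments.

Theorem proposition5p2 (R : realType) (n m : nat)
  (A : 'M[R]_n) (a : 'cV[R]_n) (alpha : R)
  (B : 'I_m -> 'M[R]_n) (b : 'I_m -> 'cV[R]_n) (beta : 'I_m -> R)
  (hA : symmx A)
  (hBs : forall i, symmx (B i))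
  (hBpsd : forall i, psd (B i))
  (i0 : 'I_m) (lam : R)
  (hB0 : pd (B i0))
  (H1 : psd (A + lam *: B i0))
  (H2 : exists2 v : 'cV[R]_n, v != 0 &
          [/\ (A + lam *: B i0) *m v = 0,
              sc ((a + lam *: b i0)^T *m v) <= 0 &
              forall i, i != i0 -> B i *m v = 0 /\ sc ((b i)^T *m v) <= 0])
  (slater : exists x0 : 'cV[R]_n, forall i, quadf (B i) (b i) (beta i) x0 < 0)
  (xbar : 'cV[R]_n)
  (hfeas : forall i, quadf (B i) (b i) (beta i) xbar <= 0) :
  (forall x : 'cV[R]_n, (forall i, quadf (B i) (b i) (beta i) x <= 0) ->
     quadf A a alpha xbar <= quadf A a alpha x)
  <->
  (exists mu : 'I_m -> R,
     (forall i, 0 <= mu i) /\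
     [/\ 2%:R *: ((A + \sum_i mu i *: B i) *m xbar) + (a + \sum_i mu i *: b i) = 0,
         (forall i, mu i * quadf (B i) (b i) (beta i) xbar = 0) &
         psd (A + \sum_i mu i *: B i)]).
Proof.
split=> [xbar_min|[mu [mu_ge0 [grad0 compl Lpsd]]]]; last first.
  exact: (kkt_sufficient alpha hA hBs mu_ge0 grad0 compl Lpsd).
have [v v_neq0 [v_ker v_descent v_other]] := H2; have [x0 x0_slater] := slater.
have [k [k_ge0 Hpsd kg0 xbar_minH]] :=
  convex_reformulation hA hBs hBpsd hB0 H1 v_neq0 v_ker v_descent v_other hfeas xbar_min.
have Hsym : symmx (A + k *: B i0) by exact/symmxD/symmxZ.
have [mu mu_ge0 [grad0 compl]] := kkt_necessary Hsym hBs hfeas xbar_minH hBpsd x0_slater.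
exists (fun i => mu i + (if i == i0 then k else 0)); split.
  by move=> i; rewrite addr_ge0 //; case: ifP.
rewrite !lagrangian_shift; split=> [//|i|]; last exact: psd_lagrangian.
by rewrite mulrDl compl add0r; case: eqP => [->|]; rewrite ?mul0r.
Qed.
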